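(* Let $(\gamma_j)_{j\ge1}$ be a sequence with $1\ge\gamma_1\ge\gamma_2\ge\cdots\ge0$ and product weights $\gamma_{\mathfrak u}=\prod_{j\in\mathfrak u}\gamma_j$, and assume there is $c>0$ with $\gamma_j\ge c$ for all $j\in\mathbb N$. Then for all $\varepsilon\in(0,1)$ and all $d\in\mathbb N$, $N_{\boldsymbol\gamma}(\varepsilon,d)\ge\left(\frac{c}{4\varepsilon}\right)^d$. In particular, the $\boldsymbol\gamma$-weighted star discrepancy of the centered regular grid suffers from the curse of dimensionality (and this holds in particular for the classical star discrepancy, i.e. $\gamma_j=1$ for all $j$).
   Context: Write $[d]=\{1,\dots,d\}$. For $m_1,\dots,m_d\in\mathbb N$ the centered regular grid is $\Gamma_{m_1,\dots,m_d}=\{(\frac{2\ell_1+1}{2m_1},\dots,\frac{2\ell_d+1}{2m_d}) : \ell_j\in\{0,\dots,m_j-1\}\}$, with $N=m_1\cdots m_d$ points. For an $N$-point set $\mathcal P_d\subset[0,1)^d$ with real coefficients $\mathcal A(\mathcal P_d)=\{a_{\boldsymbol x}\}$, the local discrepancy is $\Delta_{\mathcal P_d,\mathcal A(\mathcal P_d)}(\boldsymbol\alpha)=\sum_{\boldsymbol x\in\mathcal P_d}a_{\boldsymbol x}\mathbf 1_{[\boldsymbol 0,\boldsymbol\alpha)}(\boldsymbol x)-\prod_{j=1}^d\alpha_j$, $\boldsymbol\alpha\in[0,1]^d$, and the $\boldsymbol\gamma$-weighted star discrepancy is $D^*_{N,\boldsymbol\gamma}(\mathcal P_d,\mathcal A(\mathcal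 P_d))=\sup_{\boldsymbol\alpha\in[0,1]^d}\max_{\emptyset\ne\mathfrak u\subseteq[d]}\gamma_{\mathfrak u}|\Delta_{\mathcal P_d,\mathcal A(\mathcal P_d)}((\boldsymbol\alpha_{\mathfrak u},\boldsymbol 1))|$, where $(\boldsymbol\alpha_{\mathfrak u},\boldsymbol 1)$ has $j$-th coordinate $\alpha_j$ for $j\in\mathfrak u$ and $1$ otherwise. For $\varepsilon\in(0,1)$, $d\in\mathbb N$, $N_{\boldsymbol\gamma}(\varepsilon,d)=\min\{N: N=m_1\cdots m_d \text{ and there exist coefficients } \mathcal A(\Gamma_{m_1,\dots,m_d}) \text{ with } D^*_{N,\boldsymbol\gamma}(\Gamma_{m_1,\dots,m_d},\mathcal A(\Gamma_{m_1,\dots,m_d}))\le\varepsilon\}$. The discrepancy suffers from the curse of dimensionality if there exist $C,\varepsilon_0,\tau>0$ with $N_{\boldsymbol\gamma}(\varepsilon,d)\ge C(1+\tau)^d$ for all $\varepsilon\le\varepsilon_0$ and infinitely many $d\in\mathbb N$. *)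

From HB Require Import structures.
From mathcomp Require Import all_boot all_order all_algebra.
From mathcomp Require Import all_classical all_reals.
Set Implicit Arguments. Unset Strict Implicit. Unset Printing Implicit Defensive.
Import Order.TTheory GRing.Theory Num.Theory.
Local Open Scope ring_scope.
Local Open Scope classical_set_scope.

Section Defs.
Variable R : realType.

Definition grid_index (d : nat) (m : 'I_d -> nat) : finType :=
  {dffun forall j : 'I_d, 'I_(m j)}.

Definition grid_pt (d : nat) (m : 'I_d -> nat) (l : grid_index m) : 'I_d -> R :=
  fun j => ((2 * (l j : nat) + 1)%:R) / ((2 * m j)%:R).

Definition local_disc (d : nat) (m : 'I_d -> nat) (a : ('I_d -> R) -> R)
    (alpha : 'I_d -> R) : R :=
  \sum_(l : grid_index m)
     a (grid_pt l) * (if [forall j, (0 <= grid_pt l j) && (grid_pt l j < alpha j)]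
                      then 1 else 0)
  - \prod_(j < d) alpha j.

(* product weights gamma_u = prod_{j in u} gamma_j ; coordinate j : 'I_d is the (j+1)-th *)
Definition prod_weight (gamma : nat -> R) (d : nat) (u : {set 'I_d}) : R :=
  \prod_(j in u) gamma j.+1.

Definition alpha_u1 (d : nat) (u : {set 'I_d}) (alpha : 'I_d -> R) : 'I_d -> R :=
  fun j => if j \in u then alpha j else 1.

Definition wstar_disc (gamma : nat -> R) (d : nat) (m : 'I_d -> nat)
    (a : ('I_d -> R) -> R) : R :=
  sup [set r | exists alpha : 'I_d -> R, exists u : {set 'I_d},
        (forall j, 0 <= alpha j <= 1) /\ (u != finset.set0 :> {set 'I_d}) /\
        r = prod_weight gamma u * `|local_disc m a (alpha_u1 u alpha)|].

Definition feasibleN (gamma : nat -> R) (eps : R) (d N : nat) : Prop :=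
  exists m : 'I_d -> nat, (forall j, (0 < m j)%N) /\ N = (\prod_(j < d) m j)%N /\
    exists a : ('I_d -> R) -> R, wstar_disc gamma m a <= eps.

(* "N_gamma(eps,d) >= b": every admissible N is >= b, i.e. the minimum is >= b *)
Definition Ngamma_ge (gamma : nat -> R) (eps : R) (d : nat) (b : R) : Prop :=
  forall N, feasibleN gamma eps d N -> b <= N%:R.

Definition curse_of_dim (gamma : nat -> R) : Prop :=
  exists C eps0 tau : R, 0 < C /\ 0 < eps0 /\ 0 < tau /\
    forall eps, 0 < eps -> eps < 1 -> eps <= eps0 ->
      forall d0 : nat, exists d : nat, (d0 <= d)%N /\ (0 < d)%N /\
        Ngamma_ge gamma eps d (C * (1 + tau) ^+ d).

End Defs.

(* A coefficient-weighted grid cannot see the box [0, 1/(2 m_j)) in direction j: no grid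
   point lies in it, so the one-dimensional projection u = {j} already has weighted local
   discrepancy gamma_j / (2 m_j) >= c / (2 m_j), whatever the coefficients are.  Hence a
   grid with discrepancy at most eps has m_j >= c / (2 eps) in every direction and
   N = m_1 ... m_d >= (c / (2 eps))^d. *)
From HB Require Import structures.
From mathcomp Require Import all_boot all_order all_algebra.
From mathcomp Require Import all_classical all_reals.
From mathcomp Require Import lra.
Set Implicit Arguments. Unset Strict Implicit. Unset Printing Implicit Defensive.
Import Order.TTheory GRing.Theory Num.Theory.
Local Open Scope ring_scope.

Section WeightedStarDiscrepancy.
Variables (R : realType) (gamma : nat -> R).
Hypothesis gamma_ge0 : forall j : nat, (1 <= j)%N -> 0 <= gamma j.
Hypothesis gamma_le1 : forall j : nat, (1 <= j)%N -> gamma j <= 1.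

Lemma prod_weight_le1 d (u : {set 'I_d}) : prod_weight gamma u <= 1.
Proof. by apply: prodr_ile1 => j _; rewrite gamma_ge0 ?gamma_le1. Qed.

Lemma alpha_u1_in01 d (u : {set 'I_d}) (alpha : 'I_d -> R) :
  (forall j, 0 <= alpha j <= 1) -> forall j, 0 <= alpha_u1 u alpha j <= 1.
Proof. by move=> alpha01 j; rewrite /alpha_u1; case: ifP; rewrite ?ler01 ?lexx. Qed.

Lemma norm_local_disc_le d (m : 'I_d -> nat) a (alpha : 'I_d -> R) :
  (forall j, 0 <= alpha j <= 1) ->
  `|local_disc m a alpha| <= \sum_(l : grid_index m) `|a (grid_pt R l)| + 1.
Proof.
move=> alpha01; apply: le_trans (ler_normB _ _) _; apply: lerD.
  apply: le_trans (ler_norm_sum _ _ _) _; apply: ler_sum => l _.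
  by rewrite normrM; case: ifP; rewrite ?normr1 ?normr0 ?mulr1 ?mulr0.
rewrite ger0_norm; last by apply: prodr_ge0 => j _; case/andP: (alpha01 j).
by apply: prodr_ile1 => j _; apply: alpha01.
Qed.

Lemma wstar_disc_has_ubound d (m : 'I_d -> nat) a :
  has_ubound [set r | exists alpha : 'I_d -> R, exists u : {set 'I_d},
    (forall j, 0 <= alpha j <= 1) /\ (u != finset.set0 :> {set 'I_d}) /\
    r = prod_weight gamma u * `|local_disc m a (alpha_u1 u alpha)|].
Proof.
exists (\sum_(l : grid_index m) `|a (grid_pt R l)| + 1).
move=> _ [alpha [u [alpha01 [_ ->]]]].
apply: le_trans (ler_wpM2r (normr_ge0 _) (prod_weight_le1 u)) _.
by rewrite mul1r norm_local_disc_le //; apply: alpha_u1_in01.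
Qed.

Lemma local_disc_below_first_layer d (m : 'I_d -> nat) a (j : 'I_d) :
  (0 < m j)%N ->
  local_disc m a (alpha_u1 [set j] (fun=> ((2 * m j)%:R : R)^-1)) = - ((2 * m j)%:R)^-1.
Proof.
move=> mj_gt0; have mj2_gt0 : 0 < (2 * m j)%:R :> R by rewrite ltr0n muln_gt0.
rewrite /local_disc big1 => [|l _]; last first.
  case: ifP; rewrite ?mulr0 // => /forallP/(_ j)/andP[_].
  rewrite /alpha_u1 finset.in_set1 eqxx /grid_pt ltr_pdivrMr // mulVf ?gt_eqF //.
  by rewrite ltrn1 addn1 ltnS ltn0.
rewrite sub0r (bigD1 j) //= /alpha_u1 finset.in_set1 eqxx big1 ?mulr1 // => k.
by rewrite finset.in_set1 => /negbTE ->.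
Qed.

Lemma wstar_disc_ge_coord d (m : 'I_d -> nat) a (j : 'I_d) :
  (0 < m j)%N -> gamma j.+1 / (2 * m j)%:R <= wstar_disc gamma m a.
Proof.
move=> mj_gt0; apply: ub_le_sup (wstar_disc_has_ubound m a) _ _.
exists (fun=> ((2 * m j)%:R)^-1), [set j]; split.
  move=> k; rewrite invr_ge0 ler0n /= invf_le1 ?ltr0n ?muln_gt0 //.
  by rewrite ler1n muln_gt0.
split; first by apply/set0Pn; exists j; rewrite finset.in_set1.
rewrite local_disc_below_first_layer // normrN ger0_norm ?invr_ge0 //.
by rewrite /prod_weight big_set1.
Qed.

Lemma Ngamma_ge_half (c eps : R) d :
  0 <= c -> (forall j : nat, (1 <= j)%N -> c <= gamma j) -> 0 < eps ->
  Ngamma_ge gamma eps d ((c / (2 * eps)) ^+ d).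
Proof.
move=> c_ge0 c_le_gamma eps_gt0 _ [m [m_gt0 [-> [a disc_le]]]].
rewrite natr_prod -[d in _ ^+ d]card_ord -prodr_const.
apply: ler_prod => j _; apply/andP; split.
  by rewrite divr_ge0 // mulr_ge0 // ltW.
have mj_gt0 : 0 < (m j)%:R :> R by rewrite ltr0n.
have := le_trans (wstar_disc_ge_coord a (m_gt0 j)) disc_le.
rewrite natrM ler_pdivrMr ?mulr_gt0 // ler_pdivrMr ?mulr_gt0 // => gamma_le.
have := c_le_gamma j.+1 isT; nra.
Qed.

End WeightedStarDiscrepancy.

Lemma curse_of_dim_of_Ngamma_ge (R : realType) (gamma : nat -> R) (b : R) :
  0 < b ->
  (forall (eps : R) (d : nat), 0 < eps -> eps < 1 -> (0 < d)%N ->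
     Ngamma_ge gamma eps d ((b / eps) ^+ d)) ->
  curse_of_dim gamma.
Proof.
move=> b_gt0 Ngamma_b; exists 1, (b / 2), 1; do 3!(split; first lra).
move=> eps eps_gt0 eps_lt1 eps_le d0; exists d0.+1; do 2!split => //.
move=> N /(Ngamma_b eps d0.+1 eps_gt0 eps_lt1 isT); apply: le_trans.
rewrite mul1r lerXn2r ?nnegrE ?divr_ge0 ?(ltW b_gt0) ?(ltW eps_gt0) //; first lra.
by rewrite ler_pdivlMr //; lra.
Qed.

Theorem lemma2 (R : realType) (gamma : nat -> R) (c : R) :
  gamma 1%N <= 1 ->
  (forall j : nat, (1 <= j)%N -> gamma j.+1 <= gamma j) ->
  (forall j : nat, (1 <= j)%N -> 0 <= gamma j) ->
  0 < c ->
  (forall j : nat, (1 <= j)%N -> c <= gamma j) ->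
  (forall (eps : R) (d : nat), 0 < eps -> eps < 1 -> (0 < d)%N ->
     Ngamma_ge gamma eps d ((c / (4 * eps)) ^+ d))
  /\ curse_of_dim gamma.
Proof.
move=> gamma1_le1 gamma_decr gamma_ge0 c_gt0 c_le_gamma.
have gamma_le1 j : (1 <= j)%N -> gamma j <= 1.
  by elim: j => [//|[//|j] IH _]; apply: le_trans (gamma_decr _ _) (IH _).
have Ngamma_quarter (eps : R) d : 0 < eps -> eps < 1 -> (0 < d)%N ->
    Ngamma_ge gamma eps d ((c / 4 / eps) ^+ d).
  move=> eps_gt0 _ _ N /(Ngamma_ge_half gamma_ge0 gamma_le1 (ltW c_gt0) c_le_gamma
                          eps_gt0); apply: le_trans.
  rewrite lerXn2r ?nnegrE ?divr_ge0 ?mulr_ge0 ?(ltW c_gt0) ?(ltW eps_gt0) //.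
  by rewrite -mulrA -invfM ler_pM2l // lef_pV2 ?posrE ?mulr_gt0 //; lra.
split; last exact: (curse_of_dim_of_Ngamma_ge (divr_gt0 c_gt0 _) Ngamma_quarter).
by move=> eps d ? ? ?; rewrite invfM mulrA; apply: Ngamma_quarter.
Qed.
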